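(* Let $a\in C(\mathbb{R};\ell^{2}(\mathbb{Z}^{d}))$, $a(t,y)=\sum_{n}a_{n}(t)e^{in\cdot y}$, where $(a_n)$ is a (differentiable in time) solution of the system: for $n\in\bigcup_{\alpha\geq\alpha_{0}}\mathscr{C}_{\alpha}$, \[ i\partial_{t}a_{n}=2\sum_{(n_{1},n_{2},n_{3})\in\Lambda^{(1)}(n)}e^{it\Omega(\vec{n})}a_{n_{1}}\overline{a_{n_{2}}}a_{n_{3}}, \] and $i\partial_{t}a_{n}=0$ for all other $n\in\mathbb{Z}^d$. Then for every $\alpha\geq\alpha_{0}$, $\frac{d}{dt}\|\pi_{\alpha}a(t)\|_{\ell^{2}}^{2}=0$.
   Context: $\mathrm{A}$ is a real symmetric positive definite $d\times d$ matrix, $\lambda_{n}^{2}=n^{\intercal}\mathrm{A}n$, $|n|$ Euclidean norm, $\Omega(\vec{n})=\lambda_{n_{1}}^{2}-\lambda_{n_{2}}^{2}+\lambda_{n_{3}}^{2}-\lambda_{n}^{2}$ for $\vec n=(n_1,n_2,n_3,n)$. By a known result (Berti–Maspero), there exist $c(d)\in(0,2]$, $C(\mathrm{A},d)\geq2$ and a partition $(\mathscr{C}_{\alpha})_{\alpha\geq0}$ of $\mathbb{Z}^{d}$ with (i) $0\in\mathscr{C}_{0}$, $\max_{\mathscr{C}_{0}}|n|\leq C(\mathrm{A},d)$; (ii) $\max_{\mathscr{C}_{\alpha}}|n|\leq2\min_{\mathscr{C}_{\alpha}}|n|$ for $\alpha\geq1$; (iii) for $n_{1}\in\mathscr{C}_{\alpha_{1}},n_{2}\in\mathscr{C}_{\alpha_{2}}$,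 $\alpha_{1}\neq\alpha_{2}$: $|n_{1}-n_{2}|+|\lambda_{n_{1}}^{2}-\lambda_{n_{2}}^{2}|>(|n_{1}|+|n_{2}|)^{c(d)}$; such a partition is fixed. $K_{\alpha}=\min_{n\in\mathscr{C}_{\alpha}}|n|$ for $\alpha\geq1$, $\alpha_{0}=\min\{\alpha\geq1:K_{\alpha}\geq10^{10}C(\mathrm{A},d)\}$. For $n\in\mathscr{C}_{\alpha}$, $\alpha\geq\alpha_0$: $\Lambda^{(1)}(n)=\{(n_{1},n_{2},n_{3}): n_{1}-n_{2}+n_{3}=n,\ |\Omega(\vec n)|<1,\ n_{1}\in\mathscr{C}_{\alpha},\ |n_{2}|,|n_{3}|<10^{-5}K_{\alpha}\}$. For $u=\sum u_n e^{in\cdot y}$: $\pi_{\alpha}u=\sum_{n\in\mathscr{C}_{\alpha}}u_{n}e^{in\cdot y}$, $\|u\|_{\ell^{2}}=(\sum|u_{n}|^{2})^{1/2}$. *)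

From Stdlib Require Import Reals.
From Coquelicot Require Import Coquelicot.
From mathcomp Require Import all_boot all_order all_algebra.
From mathcomp Require Import Rstruct.
Local Open Scope R_scope.

Set Implicit Arguments.
Unset Strict Implicit.
Unset Printing Implicit Defensive.

Definition latt (d : nat) := 'rV[int]_d.

Definition toR (d : nat) (n : latt d) : 'rV[R]_d := map_mx (fun z : int => (z%:~R)%R) n.

Definition normZ (d : nat) (n : latt d) : R :=
  sqrt (\big[Rplus/0]_(i < d) (((toR n) ord0 i) * ((toR n) ord0 i))).

Definition lam2 (d : nat) (A : 'M[R]_d) (n : latt d) : R :=
  ((toR n *m A *m (toR n)^T)%R ord0 ord0).

Definition sym_posdef (d : nat) (A : 'M[R]_d) : Prop :=
  (A^T)%R = A /\ (forall v : 'rV[R]_d, v != 0%R -> 0 < (v *m A *m v^T)%R ord0 ord0).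

Definition Omega (d : nat) (A : 'M[R]_d) (n1 n2 n3 n : latt d) : R :=
  lam2 A n1 - lam2 A n2 + lam2 A n3 - lam2 A n.

Definition expi (th : R) : C := (cos th, sin th).

(* Lambda^(1)(n), given the class index map [cls] and the minima [K] *)
Definition Lambda1 (d : nat) (A : 'M[R]_d) (cls : latt d -> nat) (K : nat -> R)
  (n : latt d) (x : latt d * latt d * latt d) : Prop :=
  let: (n1, n2, n3) := x in
  (n1 - n2 + n3)%R = n /\ Rabs (Omega A n1 n2 n3 n) < 1 /\ cls n1 = cls n /\
  normZ n2 < / 10 ^ 5 * K (cls n) /\ normZ n3 < / 10 ^ 5 * K (cls n).

(* a in C(R; l^2(Z^d)): a(t) is in l^2 for each t (finite partial sums of |a_n|^2 bounded),
   and t |-> a(t) is continuous for the l^2 norm. *)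
Definition in_C_l2 (d : nat) (a : latt d -> R -> C) : Prop :=
  (forall t : R, exists M : R, forall s : seq (latt d), uniq s ->
      \big[Rplus/0]_(n <- s) (Cmod (a n t) ^ 2) <= M) /\
  (forall (t eps : R), 0 < eps -> exists del : R, 0 < del /\
      forall t' : R, Rabs (t' - t) < del -> forall s : seq (latt d), uniq s ->
        \big[Rplus/0]_(n <- s) (Cmod (Cminus (a n t') (a n t)) ^ 2) <= eps).

From Stdlib Require Import Reals Lra ClassicalEpsilon.
From Coquelicot Require Import Coquelicot.
From mathcomp Require Import all_boot all_order all_algebra.
From mathcomp Require Import Rstruct zify.
Open Scope R_scope.

Set Implicit Arguments.
Unset Strict Implicit.
Unset Printing Implicit Defensive.

(* Differentiating, d/dt |a_n|^2 = 2 Re (conj(a_n) a_n') = 4 Im (conj(a_n) W_n), where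
   i a_n' = 2 W_n.  Summed over the class C_alpha this is 4 Im of the sum, over the pairs
   (n, (n1, n2, n3)) with n in C_alpha and (n1, n2, n3) in Lambda^(1)(n), of
   conj(a_n) e^{it Omega} a_n1 conj(a_n2) a_n3.  Since Lambda^(1) keeps n1 in the class of n,
   the map (n, (n1, n2, n3)) |-> (n1, (n, n3, n2)) is an involution of this finite set of
   pairs; it changes the sign of Omega and so maps each term to its complex conjugate,
   and the imaginary parts cancel.  C_alpha is finite because its points have norm at most
   2 K_alpha. *)

Lemma is_derive_Re (f : R -> C) (x : R) (l : C) :
  is_derive f x l -> is_derive (fun t => Re (f t)) x (Re l).
Proof.
move=> df; apply: filterdiff_ext_lin.
- by apply: (filterdiff_comp _ _ _ _ df); apply/filterdiff_linear/is_linear_fst.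
- by [].
Qed.

Lemma is_derive_Im (f : R -> C) (x : R) (l : C) :
  is_derive f x l -> is_derive (fun t => Im (f t)) x (Im l).
Proof.
move=> df; apply: filterdiff_ext_lin.
- by apply: (filterdiff_comp _ _ _ _ df); apply/filterdiff_linear/is_linear_snd.
- by [].
Qed.

Lemma is_derive_Cmod2 (f : R -> C) (x : R) (l : C) :
  is_derive f x l -> is_derive (fun t => Cmod (f t) ^ 2) x (2 * Re (Cmult (Cconj (f x)) l)).
Proof.
move=> df; apply: (is_derive_ext (fun t => Re (f t) ^ 2 + Im (f t) ^ 2)).
  by move=> t; rewrite Cmod2_alt.
have -> : 2 * Re (Cmult (Cconj (f x)) l) =
          INR 2 * Re l * Re (f x) ^ 1 + INR 2 * Im l * Im (f x) ^ 1.
  by rewrite /Cmult /Cconj /Re /Im /=; ring.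
by apply: is_derive_plus; apply: is_derive_pow; [apply: is_derive_Re | apply: is_derive_Im].
Qed.

Lemma is_derive_big_Rplus (I : Type) (s : seq I) (f : I -> R -> R) (df : I -> R) (x : R) :
  (forall i, is_derive (f i) x (df i)) ->
  is_derive (fun t => \big[Rplus/0]_(i <- s) f i t) x (\big[Rplus/0]_(i <- s) df i).
Proof.
move=> hf; elim: s => [|i s IHs].
  rewrite big_nil; apply: (is_derive_ext (fun _ => 0)); last exact: is_derive_const.
  by move=> t; rewrite big_nil.
rewrite big_cons; apply: (is_derive_ext (fun t => f i t + \big[Rplus/0]_(j <- s) f j t)).
  by move=> t; rewrite big_cons.
exact: is_derive_plus.
Qed.

Lemma Im_Cmult_big_Cplus (I : Type) (c : C) (s : seq I) (F : I -> C) :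
  Im (Cmult c (\big[Cplus/RtoC 0]_(i <- s) F i)) = \big[Rplus/0]_(i <- s) Im (Cmult c (F i)).
Proof.
apply: (big_morph (fun z => Im (Cmult c z))).
- by move=> z w; case: c z w => [u v] [p q] [p' q']; rewrite /Im /=; ring.
- by case: c => [u v]; rewrite /Im /=; ring.
Qed.

Lemma Re_Cconj_mul_of_eq (a da W : C) :
  Cmult Ci da = Cmult (RtoC 2) W -> Re (Cmult (Cconj a) da) = 2 * Im (Cmult (Cconj a) W).
Proof.
case: a da W => [x y] [p q] [u v]; rewrite /Cmult /Ci /RtoC /Cconj /Re /Im /=.
case=> hq hp; have -> : p = 2 * v by lra.
have -> : q = - (2 * u) by lra.
ring.
Qed.

Section OddInvolution.
Import GRing.Theory Num.Theory.
Local Open Scope ring_scope.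

Lemma sum_odd_involution_eq0 (R : numDomainType) (T : eqType) (Q : seq T) (sig : T -> T)
    (h : T -> R) :
  uniq Q -> involutive sig -> {in Q, forall q, sig q \in Q} ->
  {in Q, forall q, h (sig q) = - h q} -> \sum_(q <- Q) h q = 0.
Proof.
move=> uQ sigK Qsig hsig.
have sig_inj := can_inj sigK.
have perm_sig : perm_eq Q (map sig Q).
  apply: uniq_perm => //; first by rewrite map_inj_uniq.
  move=> q; apply/idP/mapP => [qQ | [p pQ ->]]; last exact: Qsig.
  by exists (sig q); rewrite ?sigK ?Qsig.
have : \sum_(q <- Q) h q = - \sum_(q <- Q) h q.
  by rewrite {1}(perm_big _ perm_sig) big_map -sumrN big_seq [RHS]big_seq; apply: eq_bigr.
by move/eqP; rewrite -subr_eq0 opprK -mulr2n mulrn_eq0 => /eqP.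
Qed.

End OddInvolution.

Section LatticeEnumeration.
Import GRing.Theory Num.Theory.

Lemma coord_le_normZ (d : nat) (n : latt d) (i : 'I_d) : Rabs ((n ord0 i)%:~R)%R <= normZ n.
Proof.
have -> : ((n ord0 i)%:~R)%R = toR n ord0 i by rewrite mxE.
rewrite /normZ -sqrt_Rsqr_abs; apply: sqrt_le_1_alt.
rewrite (bigD1 i) //= -[X in X <= _]Rplus_0_r; apply: Rplus_le_compat_l.
by apply: (big_ind (fun x => 0 <= x)) => [|x y|j _]; [lra | lra | apply: Rle_0_sqr].
Qed.

Lemma bounded_latt_enum (d : nat) (B : R) (P : latt d -> bool) :
  (forall n, P n -> normZ n <= B) -> exists s : seq (latt d), uniq s /\ forall n, n \in s <-> P n.
Proof.
move=> hB; have [N BN] : exists N : nat, B <= INR N.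
  by have [N] := INR_unbounded B; exists N; lra.
have coord_le_N n i : P n -> (`|n ord0 i| <= N)%N.
  move=> Pn; rewrite -(ler_nat R) natr_absz intr_norm; apply/RleP.
  by rewrite -INRE; exact: Rle_trans _ _ _ (coord_le_normZ n i) (Rle_trans _ _ _ (hB n Pn) BN).
(* lattice points with all coordinates in [-N, N], shifted into 'I_(2N+1) *)
pose box := [seq (\row_i ((f i : nat)%:Z - N%:Z))%R : latt d
            | f : {ffun 'I_d -> 'I_(N + N).+1} <- enum {ffun 'I_d -> 'I_(N + N).+1}].
exists (undup (filter P box)); split; first exact: undup_uniq.
move=> n; rewrite mem_undup mem_filter; split=> [/andP[] // | Pn].
rewrite Pn; apply/mapP; exists [ffun i => inord `|(n ord0 i + N%:Z)%R|%N]; first by rewrite mem_enum.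
apply/rowP => j; rewrite !mxE ffunE inordK;
  by have := coord_le_N n j Pn; move: (n ord0 j) => z; lia.
Qed.

End LatticeEnumeration.

Section ResonantSymmetry.

Variables (d : nat) (A : 'M[R]_d) (cls : latt d -> nat) (K : nat -> R).

Lemma Omega_swap (n1 n2 n3 n : latt d) : Omega A n n3 n2 n1 = - Omega A n1 n2 n3 n.
Proof. by rewrite /Omega; ring. Qed.

Lemma Lambda1_swap (n n1 n2 n3 : latt d) :
  Lambda1 A cls K n (n1, n2, n3) -> Lambda1 A cls K n1 (n, n3, n2).
Proof.
case=> sum_n [res [cls_n1 [small2 small3]]]; rewrite /Lambda1 Omega_swap Rabs_Ropp cls_n1.
by split=> //; rewrite -sum_n GRing.addrK GRing.subrK.
Qed.

Variables (a : latt d -> R -> C) (t : R).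

Definition resonant_term (n : latt d) (x : latt d * latt d * latt d) : C :=
  let: (n1, n2, n3) := x in
  Cmult (Cmult (Cmult (expi (t * Omega A n1 n2 n3 n)) (a n1 t)) (Cconj (a n2 t))) (a n3 t).

Definition resonant_flux (n : latt d) (x : latt d * latt d * latt d) : R :=
  Im (Cmult (Cconj (a n t)) (resonant_term n x)).

Lemma resonant_flux_swap (n n1 n2 n3 : latt d) :
  resonant_flux n1 (n, n3, n2) = - resonant_flux n (n1, n2, n3).
Proof.
rewrite /resonant_flux /resonant_term Omega_swap /expi -Ropp_mult_distr_r cos_neg sin_neg.
case: (a n t) (a n1 t) (a n2 t) (a n3 t) => [x y] [x1 y1] [x2 y2] [x3 y3].
by rewrite /Im /=; ring.
Qed.

Variables (al : nat) (s : seq (latt d)) (S : latt d -> seq (latt d * latt d * latt d)).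
Hypotheses (uniq_s : uniq s) (mem_s : forall n, n \in s <-> cls n = al).
Hypotheses (uniq_S : forall n, cls n = al -> uniq (S n))
  (mem_S : forall n x, cls n = al -> x \in S n <-> Lambda1 A cls K n x).

Lemma big_resonant_flux_eq0 :
  \big[Rplus/0]_(n <- s) \big[Rplus/0]_(x <- S n) resonant_flux n x = 0.
Proof.
pose swap (q : latt d * (latt d * latt d * latt d)) := (q.2.1.1, (q.1, q.2.2, q.2.1.2)).
pose pairs := [seq (n, x) | n <- s, x <- S n].
have mem_pairs q : q \in pairs <-> cls q.1 = al /\ Lambda1 A cls K q.1 q.2.
  split=> [/allpairsPdep[n [x [/mem_s cls_n /(mem_S _ cls_n) Lx ->]]] // | [cls_q Lq]].
  apply/allpairsPdep; exists q.1, q.2.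
  by split; [apply/mem_s | apply/mem_S | case: q {cls_q Lq}].
rewrite -(big_allpairs_dep (h := pair) (F := fun q => resonant_flux q.1 q.2)).
apply: (sum_odd_involution_eq0 (sig := swap) (h := fun q => resonant_flux q.1 q.2)).
- apply: allpairs_uniq_dep => // [n /mem_s /uniq_S | [n x] [m y] _ _ [-> ->]] //.
- by case=> n [[n1 n2] n3].
- case=> n [[n1 n2] n3] /mem_pairs[cls_n L]; apply/mem_pairs.
  by split; [case: L => _ [_ [->]] | exact: Lambda1_swap].
- by case=> n [[n1 n2] n3] _; apply: resonant_flux_swap.
Qed.

End ResonantSymmetry.

Theorem lemma2p9
  (d : nat) (A : 'M[R]_d) (hA : sym_posdef A)
  (* constants c(d), C(A,d) and the fixed partition (C_alpha), C_alpha = {n | cls n = alpha} *)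
  (c Cc : R) (cls : latt d -> nat)
  (hc : 0 < c <= 2) (hCc : 2 <= Cc)
  (hP0 : cls 0%R = 0%N)
  (hP1 : forall n : latt d, cls n = 0%N -> normZ n <= Cc)
  (hP2 : forall (al : nat) (n m : latt d), (1 <= al)%N -> cls n = al -> cls m = al ->
           normZ n <= 2 * normZ m)
  (hP3 : forall n1 n2 : latt d, cls n1 <> cls n2 ->
           normZ (n1 - n2)%R + Rabs (lam2 A n1 - lam2 A n2) >
              Rpower (normZ n1 + normZ n2) c)
  (* K_alpha = min_{n in C_alpha} |n| for alpha >= 1 *)
  (K : nat -> R)
  (hK : forall al : nat, (1 <= al)%N ->
          (exists n : latt d, cls n = al /\ normZ n = K al) /\
          (forall n : latt d, cls n = al -> K al <= normZ n))
  (* alpha_0 = min { alpha >= 1 : K_alpha >= 10^10 C(A,d) } *)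
  (al0 : nat) (hal0 : (1 <= al0)%N) (hKal0 : 10 ^ 10 * Cc <= K al0)
  (hal0min : forall al : nat, (1 <= al)%N -> (al < al0)%N -> K al < 10 ^ 10 * Cc)
  (* the solution and its time derivative *)
  (a da : latt d -> R -> C)
  (ha : in_C_l2 a)
  (hda : forall (n : latt d) (t : R), is_derive (a n) t (da n t))
  (hsys : forall (n : latt d) (t : R), (al0 <= cls n)%N ->
     exists s : seq (latt d * latt d * latt d), uniq s /\
       (forall x, x \in s <-> Lambda1 A cls K n x) /\
       Cmult Ci (da n t) =
         Cmult (RtoC 2) (\big[Cplus/RtoC 0]_(x <- s)
            (let: (n1, n2, n3) := x in
             Cmult (Cmult (Cmult (expi (t * Omega A n1 n2 n3 n)) (a n1 t))
                          (Cconj (a n2 t))) (a n3 t))))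
  (hrest : forall (n : latt d) (t : R), (cls n < al0)%N -> Cmult Ci (da n t) = RtoC 0) :
  forall al : nat, (al0 <= al)%N ->
    exists s : seq (latt d), uniq s /\ (forall n, n \in s <-> cls n = al) /\
      forall t : R,
        is_derive (fun t' : R => \big[Rplus/0]_(n <- s) Cmod (a n t') ^ 2) t 0.
Proof.
move=> al le_al0_al; have al_pos : (1 <= al)%N := leq_trans hal0 le_al0_al.
have [s [uniq_s mem_s]] : exists s : seq (latt d), uniq s /\ forall n, n \in s <-> cls n = al.
  have [[m [cls_m <-]] _] := hK al al_pos.
  have [s [uniq_s mem_s]] : exists s : seq (latt d), uniq s /\ forall n, n \in s <-> cls n == al.
    by apply: (bounded_latt_enum (B := 2 * normZ m)) => n /eqP cls_n; exact: hP2 cls_m.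
  by exists s; split=> // n; split=> [/mem_s/eqP | /eqP/mem_s].
exists s; split=> //; split=> // t.
pose solves_at n (Sn : seq (latt d * latt d * latt d)) :=
  [/\ uniq Sn, forall x, x \in Sn <-> Lambda1 A cls K n x &
      Cmult Ci (da n t) = Cmult (RtoC 2) (\big[Cplus/RtoC 0]_(x <- Sn) resonant_term A a t n x)].
have [S hS] : exists S, forall n, cls n = al -> solves_at n (S n).
  apply: (ClassicalEpsilon.choice (fun n Sn => cls n = al -> solves_at n Sn)) => n.
  have [cls_n | /eqP ncls_n] := eqVneq (cls n) al; last by exists [::].
  by have [Sn [? [? ?]]] := hsys n t ltac:(by rewrite cls_n); exists Sn; split.
have := is_derive_big_Rplus s (fun n => is_derive_Cmod2 (hda n t)).
suff -> : \big[Rplus/0]_(n <- s) (2 * Re (Cmult (Cconj (a n t)) (da n t))) = 0 by [].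
rewrite (eq_big_seq (fun n => 4 * \big[Rplus/0]_(x <- S n) resonant_flux A a t n x)).
  rewrite -big_distrr (@big_resonant_flux_eq0 _ A cls K a t al s S) //; last first.
  - by move=> n x /hS[].
  - by move=> n /hS[].
  exact: Rmult_0_r.
move=> n /mem_s /hS[_ _ eq_n].
by rewrite (Re_Cconj_mul_of_eq _ eq_n) Im_Cmult_big_Cplus /resonant_flux; ring.
Qed.
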